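(* The sets $\{123,2413,3142\}$ and $\{132,2314,3124\}$ are forest-Wilf equivalent.
   Context: A rooted labeled forest on $[n]$ is an unordered forest on $n$ vertices, each component with a distinguished root, with distinct labels from $[n]$. For a pattern (permutation) $\pi$ of $[k]$, an instance is a sequence of vertices $v_1,\dots,v_k$ with $v_i$ a strict ancestor of $v_{i+1}$ whose labels are in the same relative order as $\pi$; a forest avoids a set of patterns if it contains no instance of any of them. Two sets are forest-Wilf equivalent if for every $n\ge 0$ the numbers of rooted labeled forests on $[n]$ avoiding each set are equal. *)

From mathcomp Require Import all_boot.
Set Implicit Arguments. Unset Strict Implicit. Unset Printing Implicit Defensive.

(* A rooted labeled forest on [n] (vertices 'I_n, i.e. labels 0..n-1 standing
   for 1..n) is encoded by its parent function: par v = None iff v is a root,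
   par v = Some u iff u is the parent of v.  Rooted labeled forests on [n]
   are in bijection with acyclic parent functions. *)
Definition parent_fun (n : nat) := {ffun 'I_n -> option 'I_n}.

Definition up (n : nat) (par : parent_fun n) (x : option 'I_n) : option 'I_n :=
  obind par x.

Definition is_forest (n : nat) (par : parent_fun n) : bool :=
  [forall v : 'I_n, iter n (up par) (Some v) == None].

Definition strict_anc (n : nat) (par : parent_fun n) (u v : 'I_n) : bool :=
  [exists k : 'I_n.+1, (0 < k) && (iter k (up par) (Some v) == Some u)].

(* patterns are permutations of [k] written as sequences, e.g. [:: 2;4;1;3] *)
Definition pattern := seq nat.

Definition is_instance (n : nat) (par : parent_fun n) (pi : pattern)
    (t : (size pi).-tuple 'I_n) : bool :=
  [forall i : 'I_(size pi), forall j : 'I_(size pi),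
     ((i.+1 == j :> nat) ==> strict_anc par (tnth t i) (tnth t j)) &&
     ((tnth t i < tnth t j) == (nth 0 pi i < nth 0 pi j))].

Definition contains (n : nat) (par : parent_fun n) (pi : pattern) : bool :=
  [exists t : (size pi).-tuple 'I_n, is_instance par t].

Definition avoids (n : nat) (par : parent_fun n) (S : seq pattern) : bool :=
  all (fun pi => ~~ contains par pi) S.

Definition num_avoiding (S : seq pattern) (n : nat) : nat :=
  #|[set par : parent_fun n | is_forest par && avoids par S]|.

Definition forest_wilf_equiv (S1 S2 : seq pattern) : Prop :=
  forall n : nat, num_avoiding S1 n = num_avoiding S2 n.

From mathcomp Require Import all_boot zify.
Set Implicit Arguments. Unset Strict Implicit. Unset Printing Implicit Defensive.

(* Call a vertex upper if one of its ancestors has a smaller label and lower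
   otherwise, and call blocks the maximal connected sets of upper vertices.
   [rev_blocks] relabels a forest by reversing the order of the labels inside
   every block; it is an involution, as it fixes the lower vertices and maps
   every block onto itself.  If the forest avoids {123, 2413, 3142} or
   {132, 2314, 3124}, two distinct blocks on a chain, or a block and a lower
   vertex on a chain, compare as wholes, so along chains the relabelling flips
   exactly the comparisons inside blocks ([block_rev_ltE]).  Avoiding the first
   set, every descendant of an upper vertex is smaller; avoiding the second, a
   descendant of an upper vertex is larger iff it lies in the same block.  With
   this, an occurrence of a pattern of one set in the relabelled forest yields
   an occurrence of a pattern of the other set in the original forest, so
   [rev_blocks] exchanges the two classes of avoiding forests. *)

(* [lia] is very slow in the presence of the large boolean hypotheses of this
   development, so only the order facts are kept. *)
Ltac order_lia :=
  repeat match goal with H : ?T |- _ =>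
    lazymatch T with
    | is_true (_ < _) => fail | is_true (_ <= _) => fail | is_true (_ != _) => fail
    | (_ < _) = _ => fail | _ => clear H
    end
  end; lia.

Section Ancestry.
Variables (n : nat) (par : parent_fun n).
Hypothesis par_forest : is_forest par.
Local Notation anc := (strict_anc par).

Lemma iter_up_None k : iter k (up par) None = None.
Proof. by elim: k => //= k ->. Qed.

Lemma iter_up_ge v k : n <= k -> iter k (up par) (Some v) = None.
Proof.
move=> le_nk; rewrite -(subnK le_nk) iterD.
by have /eqP -> := forallP par_forest v; rewrite iter_up_None.
Qed.

Lemma strict_ancP u v :
  reflect (exists2 k, 0 < k & iter k (up par) (Some v) = Some u) (anc u v).
Proof.
apply: (iffP existsP) => [[k /andP[k_gt0 /eqP e]]|[k k_gt0 e]]; first by exists k.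
have k_lt : k < n.+1.
  by rewrite ltnS leqNgt; apply/negP => /ltnW /(iter_up_ge v); rewrite e.
by exists (Ordinal k_lt); rewrite /= k_gt0 e eqxx.
Qed.

Lemma anc_trans a b c : anc a b -> anc b c -> anc a c.
Proof.
move=> /strict_ancP[k1 k1_gt0 e1] /strict_ancP[k2 _ e2].
by apply/strict_ancP; exists (k1 + k2); rewrite ?addn_gt0 ?k1_gt0 // iterD e2 e1.
Qed.

Lemma anc_irr v : anc v v = false.
Proof.
apply/negbTE/strict_ancP => -[k k_gt0 e].
have iter_mul m : iter (k * m) (up par) (Some v) = Some v.
  by elim: m => [|m IH]; rewrite ?muln0 // mulnS iterD IH e.
by move: (iter_mul n); rewrite iter_up_ge // leq_pmull.
Qed.

Lemma anc_asym u v : anc u v -> anc v u -> False.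
Proof. by move=> uv /(anc_trans uv); rewrite anc_irr. Qed.

Lemma anc_nat_neq u v : anc u v -> (u : nat) != v.
Proof. by apply: contraTneq => /val_inj->; rewrite anc_irr. Qed.

Lemma anc_total a b c : anc a c -> anc b c -> [\/ a = b, anc a b | anc b a].
Proof.
move=> /strict_ancP[k1 k1_gt0 e1] /strict_ancP[k2 k2_gt0 e2].
case: (ltngtP k1 k2) => [lt12|lt21|eq12].
- move: e2; rewrite -(subnK (ltnW lt12)) iterD e1 => e.
  by constructor 3; apply/strict_ancP; exists (k2 - k1); rewrite ?subn_gt0.
- move: e1; rewrite -(subnK (ltnW lt21)) iterD e2 => e.
  by constructor 2; apply/strict_ancP; exists (k1 - k2); rewrite ?subn_gt0.
- by constructor 1; move: e2; rewrite -eq12 e1 => -[].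
Qed.

Lemma par_anc v p : par v = Some p -> anc p v.
Proof. by move=> e; apply/strict_ancP; exists 1. Qed.

Lemma anc_par u v p : anc u v -> par v = Some p -> u = p \/ anc u p.
Proof.
move=> /strict_ancP[[|k] // _ e] vp; move: e; rewrite iterSr /= vp.
case: k => [[->]|k e]; [by left | right].
by apply/strict_ancP; exists k.+1.
Qed.

End Ancestry.

Section SeqMirror.
Variables (T : eqType) (s : seq T).
Hypothesis s_uniq : uniq s.

Definition mirror_seq x := nth x (rev s) (index x s).

Lemma mirror_seq_spec x : x \in s ->
  mirror_seq x \in s /\ index (mirror_seq x) s = size s - (index x s).+1.
Proof.
rewrite -index_mem => lt_x; have lt_m : size s - (index x s).+1 < size s by lia.
by rewrite /mirror_seq nth_rev // mem_nth // index_uniq.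
Qed.

Lemma mirror_seqK : {in s, involutive mirror_seq}.
Proof.
move=> x xs; have [_ mE] := mirror_seq_spec xs; have := xs; rewrite -index_mem => lt_x.
rewrite {1}/mirror_seq mE nth_rev; last by lia.
have -> : size s - (size s - (index x s).+1).+1 = index x s by lia.
by rewrite (set_nth_default x) ?nth_index.
Qed.

Lemma mirror_seq_ltE (f : T -> nat) : sorted (relpre f ltn) s ->
  {in s &, forall x y, (f (mirror_seq x) < f (mirror_seq y)) = (f y < f x)}.
Proof.
rewrite -sorted_map => sorted_fs x y xs ys.
have fs_mono : {in [pred i | i < size (map f s)] &, {mono nth 0 (map f s) : i j / i < j}}.
  exact: leqW_mono_in (leq_mono_in (sorted_ltn_nth ltn_trans 0 sorted_fs)).
have f_nth z : z \in s -> f z = nth 0 (map f s) (index z s).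
  by move=> zs; rewrite (nth_map z) ?nth_index ?index_mem.
have [mxs mxE] := mirror_seq_spec xs; have [mys myE] := mirror_seq_spec ys.
have := xs; have := ys; rewrite -!index_mem => lt_y lt_x.
rewrite (f_nth _ xs) (f_nth _ ys) (f_nth _ mxs) (f_nth _ mys) mxE myE.
by rewrite !fs_mono ?inE ?size_map; lia.
Qed.

End SeqMirror.

Definition mirror n (A : {set 'I_n}) := mirror_seq (enum A).

Lemma sorted_enum_set n (A : {set 'I_n}) : sorted (relpre val ltn) (enum A).
Proof.
have := iota_ltn_sorted 0 n; rewrite -val_enum_ord sorted_map => sorted_ord.
rewrite /enum_mem -enumT; apply: sorted_filter sorted_ord => y x z; exact: ltn_trans.
Qed.

Section SetMirror.
Variables (n : nat) (A : {set 'I_n}).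

Lemma mirror_in v : v \in A -> mirror A v \in A.
Proof.
by rewrite -!(mem_enum (mem A)) => /(mirror_seq_spec (enum_uniq (mem A))) [].
Qed.

Lemma mirrorK : {in A, involutive (mirror A)}.
Proof. by move=> v; rewrite -(mem_enum (mem A)); apply: (mirror_seqK (enum_uniq _)). Qed.

Lemma mirror_ltE v w : v \in A -> w \in A -> (mirror A v < mirror A w) = (w < v).
Proof.
rewrite -!(mem_enum (mem A)) => vA wA.
exact: (mirror_seq_ltE (enum_uniq _) (sorted_enum_set A) vA wA).
Qed.

End SetMirror.

Section Relabel.
Variables (n : nat) (s : 'I_n -> 'I_n).
Hypothesis sK : involutive s.

Definition relabel (par : parent_fun n) : parent_fun n := [ffun v => omap s (par (s v))].

Lemma iter_up_relabel par k v :
  iter k (up (relabel par)) (Some (s v)) = omap s (iter k (up par) (Some v)).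
Proof.
elim: k => [//|k IH]; rewrite !iterS IH.
by case: (iter k (up par) (Some v)) => [w|] //=; rewrite /up /= ffunE sK.
Qed.

Lemma relabel_forest par : is_forest par -> is_forest (relabel par).
Proof.
move=> /forallP par_forest; apply/forallP => v.
by rewrite -[v]sK iter_up_relabel (eqP (par_forest _)).
Qed.

Lemma relabel_anc par u v : strict_anc (relabel par) u v = strict_anc par (s u) (s v).
Proof.
have omap_s_eq (x : option 'I_n) w : (omap s x == Some w) = (x == Some (s w)).
  by case: x => [x|] //=; rewrite !(inj_eq Some_inj) -{1}[w]sK (inj_eq (can_inj sK)).
rewrite /strict_anc -{1}[v]sK; apply: eq_existsb => k.
by rewrite iter_up_relabel omap_s_eq.
Qed.

Lemma relabelK : involutive relabel.
Proof.
by move=> par; apply/ffunP => v; rewrite !ffunE sK; case: (par v) => //= w; rewrite sK.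
Qed.

End Relabel.

Lemma eq_relabel n (s1 s2 : 'I_n -> 'I_n) par : s1 =1 s2 -> relabel s1 par = relabel s2 par.
Proof. by move=> e12; apply/ffunP => v; rewrite !ffunE !e12; apply: eq_omap. Qed.

Section Patterns.
Variables (n : nat) (par : parent_fun n).
Hypothesis par_forest : is_forest par.
Local Notation anc := (strict_anc par).

Lemma contains3_chain (x y z : nat) : contains par [:: x; y; z] ->
  exists a b c, [/\ anc a b, anc b c,
    (a < b) = (x < y), (a < c) = (x < z) & (b < c) = (y < z)].
Proof.
case/existsP => t /forallP inst; have inst_ij (i j : 'I_3) := forallP (inst i) j.
pose i0 := @Ordinal 3 0 isT; pose i1 := @Ordinal 3 1 isT; pose i2 := @Ordinal 3 2 isT.
exists (tnth t i0), (tnth t i1), (tnth t i2).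
have /andP[/implyP anc01 /eqP lt01] := inst_ij i0 i1.
have /andP[_ /eqP lt02] := inst_ij i0 i2.
have /andP[/implyP anc12 /eqP lt12] := inst_ij i1 i2.
by split; [apply: anc01 | apply: anc12 | ..].
Qed.

Lemma contains4_chain (x y z w : nat) : contains par [:: x; y; z; w] ->
  exists a b c d, [/\ anc a b, anc b c, anc c d,
   [/\ (a < b) = (x < y), (a < c) = (x < z) & (a < d) = (x < w)] &
   [/\ (b < c) = (y < z), (b < d) = (y < w) & (c < d) = (z < w)]].
Proof.
case/existsP => t /forallP inst; have inst_ij (i j : 'I_4) := forallP (inst i) j.
pose i0 := @Ordinal 4 0 isT; pose i1 := @Ordinal 4 1 isT.
pose i2 := @Ordinal 4 2 isT; pose i3 := @Ordinal 4 3 isT.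
exists (tnth t i0), (tnth t i1), (tnth t i2), (tnth t i3).
have /andP[/implyP anc01 /eqP lt01] := inst_ij i0 i1.
have /andP[_ /eqP lt02] := inst_ij i0 i2.
have /andP[_ /eqP lt03] := inst_ij i0 i3.
have /andP[/implyP anc12 /eqP lt12] := inst_ij i1 i2.
have /andP[_ /eqP lt13] := inst_ij i1 i3.
have /andP[/implyP anc23 /eqP lt23] := inst_ij i2 i3.
by split; [apply: anc01 | apply: anc12 | apply: anc23 | split | split].
Qed.

Lemma chain3_contains a b c (x y z : nat) : anc a b -> anc b c ->
  (a < b) = (x < y) -> (a < c) = (x < z) -> (b < c) = (y < z) ->
  uniq [:: x; y; z] -> contains par [:: x; y; z].
Proof.
move=> ab bc lt_ab lt_ac lt_bc; rewrite /= !inE !negb_or => /and3P[/andP[xy xz] yz _].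
have ac := anc_trans par_forest ab bc.
move: (anc_nat_neq par_forest ab) (anc_nat_neq par_forest bc) (anc_nat_neq par_forest ac).
move=> ne_ab ne_bc ne_ac; apply/existsP; exists [tuple a; b; c].
apply/forallP => -[[|[|[|i]]] lt_i] //; apply/forallP => -[[|[|[|j]]] lt_j] //;
  rewrite !(tnth_nth a) /= ?ab ?bc /=; apply/eqP; order_lia.
Qed.

Lemma chain4_contains a b c d (x y z w : nat) : anc a b -> anc b c -> anc c d ->
  (a < b) = (x < y) -> (a < c) = (x < z) -> (a < d) = (x < w) ->
  (b < c) = (y < z) -> (b < d) = (y < w) -> (c < d) = (z < w) ->
  uniq [:: x; y; z; w] -> contains par [:: x; y; z; w].
Proof.
move=> ab bc cd lt_ab lt_ac lt_ad lt_bc lt_bd lt_cd.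
rewrite /= !inE !negb_or => /and4P[/and3P[xy xz xw] /andP[yz yw] zw _].
have ac := anc_trans par_forest ab bc; have bd := anc_trans par_forest bc cd.
have ad := anc_trans par_forest ac cd.
move: (anc_nat_neq par_forest ab) (anc_nat_neq par_forest bc) (anc_nat_neq par_forest cd).
move: (anc_nat_neq par_forest ac) (anc_nat_neq par_forest bd) (anc_nat_neq par_forest ad).
move=> ne_ac ne_bd ne_ad ne_ab ne_bc ne_cd; apply/existsP; exists [tuple a; b; c; d].
apply/forallP => -[[|[|[|[|i]]]] lt_i] //; apply/forallP => -[[|[|[|[|j]]]] lt_j] //;
  rewrite !(tnth_nth a) /= ?ab ?bc ?cd /=; apply/eqP; order_lia.
Qed.

Lemma contains123 a b c : anc a b -> anc b c -> a < b -> b < c -> contains par [:: 1; 2; 3].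
Proof. by move=> ab bc ? ?; apply: (chain3_contains ab bc) => //=; order_lia. Qed.

Lemma contains132 a b c : anc a b -> anc b c -> a < c -> c < b -> contains par [:: 1; 3; 2].
Proof. by move=> ab bc ? ?; apply: (chain3_contains ab bc) => //=; order_lia. Qed.

Lemma contains2413 a b c d : anc a b -> anc b c -> anc c d ->
  c < a -> a < d -> d < b -> contains par [:: 2; 4; 1; 3].
Proof. by move=> ab bc cd ? ? ?; apply: (chain4_contains ab bc cd) => //=; order_lia. Qed.

Lemma contains3142 a b c d : anc a b -> anc b c -> anc c d ->
  b < d -> d < a -> a < c -> contains par [:: 3; 1; 4; 2].
Proof. by move=> ab bc cd ? ? ?; apply: (chain4_contains ab bc cd) => //=; order_lia. Qed.

Lemma contains2314 a b c d : anc a b -> anc b c -> anc c d ->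
  c < a -> a < b -> b < d -> contains par [:: 2; 3; 1; 4].
Proof. by move=> ab bc cd ? ? ?; apply: (chain4_contains ab bc cd) => //=; order_lia. Qed.

Lemma contains3124 a b c d : anc a b -> anc b c -> anc c d ->
  b < c -> c < a -> a < d -> contains par [:: 3; 1; 2; 4].
Proof. by move=> ab bc cd ? ? ?; apply: (chain4_contains ab bc cd) => //=; order_lia. Qed.

End Patterns.

Section RelabelPatterns.
Variables (n : nat) (s : 'I_n -> 'I_n) (par : parent_fun n).
Hypothesis sK : involutive s.
Local Notation anc := (strict_anc par).

Lemma relabel_contains3 (x y z : nat) : contains (relabel s par) [:: x; y; z] ->
  exists a b c, [/\ anc a b, anc b c, (s a < s b) = (x < y), (s a < s c) = (x < z)
    & (s b < s c) = (y < z)].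
Proof.
case/contains3_chain => a [b [c []]]; rewrite !(relabel_anc sK) => ab bc *.
by exists (s a), (s b), (s c); rewrite !sK.
Qed.

Lemma relabel_contains4 (x y z w : nat) : contains (relabel s par) [:: x; y; z; w] ->
  exists a b c d, [/\ anc a b, anc b c, anc c d,
   [/\ (s a < s b) = (x < y), (s a < s c) = (x < z) & (s a < s d) = (x < w)] &
   [/\ (s b < s c) = (y < z), (s b < s d) = (y < w) & (s c < s d) = (z < w)]].
Proof.
case/contains4_chain => a [b [c [d []]]]; rewrite !(relabel_anc sK) => ab bc cd *.
by exists (s a), (s b), (s c), (s d); rewrite !sK.
Qed.

End RelabelPatterns.

Definition S123 : seq pattern := [:: [:: 1; 2; 3]; [:: 2; 4; 1; 3]; [:: 3; 1; 4; 2]].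
Definition S132 : seq pattern := [:: [:: 1; 3; 2]; [:: 2; 3; 1; 4]; [:: 3; 1; 2; 4]].

Lemma avoids_S123P n (par : parent_fun n) : avoids par S123 ->
  [/\ ~~ contains par [:: 1; 2; 3], ~~ contains par [:: 2; 4; 1; 3]
    & ~~ contains par [:: 3; 1; 4; 2]].
Proof. by case/and4P. Qed.

Lemma avoids_S132P n (par : parent_fun n) : avoids par S132 ->
  [/\ ~~ contains par [:: 1; 3; 2], ~~ contains par [:: 2; 3; 1; 4]
    & ~~ contains par [:: 3; 1; 2; 4]].
Proof. by case/and4P. Qed.

Section Blocks.
Variables (n : nat) (par : parent_fun n).
Hypothesis par_forest : is_forest par.
Local Notation anc := (strict_anc par).

Definition upper v := [exists u, anc u v && (u < v)].

Lemma lt_anc_upper u v : anc u v -> u < v -> upper v.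
Proof. by move=> uv lt_uv; apply/existsP; exists u; rewrite uv. Qed.

Lemma lower_lt_anc u v : ~~ upper v -> anc u v -> v < u.
Proof.
move=> /existsPn /(_ u); rewrite negb_and -leqNgt => /orP[/negP//|le_uv] uv.
by rewrite ltn_neqAle eq_sym (anc_nat_neq par_forest uv).
Qed.

Definition is_min_anc m v := anc m v && [forall u, anc u v ==> (m <= u)].
Definition min_anc v := odflt v [pick m | is_min_anc m v].

Lemma min_anc_eq m v : is_min_anc m v -> min_anc v = m.
Proof.
move=> /andP[mv /forallP m_min]; rewrite /min_anc; case: pickP => [m' | /(_ m)].
  move=> /andP[m'v /forallP m'_min]; apply/val_inj/eqP.
  by rewrite eqn_leq (implyP (m'_min m) mv) (implyP (m_min m') m'v).
by rewrite /is_min_anc mv; move/negP; case; apply/forallP.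
Qed.

Lemma min_anc_is_min u v : anc u v -> is_min_anc (min_anc v) v.
Proof.
move=> uv; have [m mv m_min] := @arg_minnP _ u (anc^~ v) (@nat_of_ord n) uv.
have m_is_min : is_min_anc m v.
  by rewrite /is_min_anc mv; apply/forallP => w; apply/implyP/m_min.
by rewrite (min_anc_eq m_is_min).
Qed.

Lemma min_ancP v : upper v -> [/\ anc (min_anc v) v, min_anc v < v,
  forall u, anc u v -> min_anc v <= u & ~~ upper (min_anc v)].
Proof.
move=> /existsP[u /andP[uv lt_uv]].
have /andP[mv /forallP m_min] := min_anc_is_min uv.
have {}m_min w : anc w v -> min_anc v <= w by apply/implyP.
split=> //; first exact: leq_ltn_trans (m_min u uv) lt_uv.
apply/existsP => -[w /andP[wm lt_wm]].
by have := m_min w (anc_trans par_forest wm mv); rewrite leqNgt lt_wm.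
Qed.

(* The block of an upper vertex [v] is the maximal connected set of upper
   vertices containing it; its root is the child of [min_anc v] towards [v].
   For a lower [v], [block_root v] is a junk value. *)
Definition is_block_root w v := ((w == v) || anc w v) && (par w == Some (min_anc v)).
Definition block_root v := odflt v [pick w | is_block_root w v].

Lemma is_block_root_uniq w1 w2 v : is_block_root w1 v -> is_block_root w2 v -> w1 = w2.
Proof.
have no_nested a b : anc a b -> par a = Some (min_anc v) -> par b = Some (min_anc v) -> False.
  move=> ab /(par_anc par_forest) ma /(anc_par par_forest ab) [am | bm].
    by rewrite am anc_irr in ma.
  exact: (anc_asym par_forest bm ma).
move=> /andP[/orP w1v /eqP p1] /andP[/orP w2v /eqP p2].
case: w1v => [/eqP e1 | w1v]; case: w2v => [/eqP e2 | w2v].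
- by rewrite e1 e2.
- by rewrite e1 in p1; case: (no_nested _ _ w2v p2 p1).
- by rewrite e2 in p2; case: (no_nested _ _ w1v p1 p2).
case: (anc_total par_forest w1v w2v) => // [w12 | w21].
  by case: (no_nested _ _ w12 p1 p2).
by case: (no_nested _ _ w21 p2 p1).
Qed.

Lemma block_root_eq w v : is_block_root w v -> block_root v = w.
Proof.
move=> wv; rewrite /block_root; case: pickP => [w' w'v | /(_ w)]; last by rewrite wv.
exact: is_block_root_uniq w'v wv.
Qed.

Lemma block_rootP v : upper v ->
  (block_root v = v \/ anc (block_root v) v) /\ par (block_root v) = Some (min_anc v).
Proof.
move=> v_up; suff /andP[/orP[/eqP-> | rv] /eqP rp] : is_block_root (block_root v) v.
- by split; [left | ].
- by split; [right | ].
rewrite /block_root; case: pickP => [w //|/= no_root]; exfalso.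
have [/(strict_ancP par_forest)[[//|k] _]] := min_ancP v_up; rewrite iterS.
case E: (iter k (up par) (Some v)) => [w|//] /= wp _ _ _.
have := no_root w; rewrite /is_block_root wp eqxx andbT => /negbT/negP; apply.
case: k E => [[->] | k E]; first by rewrite eqxx.
by apply/orP; right; apply/(strict_ancP par_forest); exists k.+1.
Qed.

Lemma min_anc_block_root v :
  upper v -> anc (min_anc v) (block_root v) /\ min_anc v < block_root v.
Proof.
move=> v_up; have [rv /(par_anc par_forest) mr] := block_rootP v_up.
have [_ lt_mv m_min _] := min_ancP v_up.
split=> //; case: rv => [-> // | rv].
by rewrite ltn_neqAle (anc_nat_neq par_forest mr) m_min.
Qed.

Lemma min_anc_eq_root r y : upper r -> upper y -> block_root r = block_root y ->
  min_anc r = min_anc y.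
Proof.
move=> r_up y_up e; have [_ pr] := block_rootP r_up; have [_ py] := block_rootP y_up.
by move: pr; rewrite e py => -[].
Qed.

Lemma lower_anc_min_anc z y : upper y -> ~~ upper z -> anc z y ->
  min_anc y = z \/ anc z (min_anc y).
Proof.
move=> y_up z_low zy; have [my _ m_min _] := min_ancP y_up.
case: (anc_total par_forest zy my) => [-> | | mz]; [by left | by right | exfalso].
by have := lower_lt_anc z_low mz; rewrite ltnNge m_min.
Qed.

Lemma same_rootP x y : anc x y -> upper x -> upper y ->
  reflect (forall z, anc x z -> anc z y -> upper z) (block_root x == block_root y).
Proof.
move=> xy x_up y_up; apply: (iffP eqP) => [e z xz zy | between_up].
  apply: contraT => z_low; have E := min_anc_eq_root x_up y_up e.
  have [mx _ _ _] := min_ancP x_up.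
  case: (lower_anc_min_anc y_up z_low zy) => [mz | zm].
    by rewrite E mz in mx; case: (anc_asym par_forest mx xz).
  by rewrite -E in zm; case: (anc_asym par_forest (anc_trans par_forest zm mx) xz).
have [mx lt_mx mx_min mx_low] := min_ancP x_up.
have [my _ my_min my_low] := min_ancP y_up.
have E : min_anc y = min_anc x.
  case: (anc_total par_forest my xy) => [e | myx | xmy].
  - by rewrite e x_up in my_low.
  - apply/val_inj/eqP.
    by rewrite eqn_leq (mx_min _ myx) (my_min _ (anc_trans par_forest mx xy)).
  - by rewrite (between_up _ xmy my) in my_low.
have [rx px] := block_rootP x_up.
symmetry; apply: block_root_eq; rewrite /is_block_root E px eqxx andbT.
case: rx => [-> | rx]; first by rewrite xy orbT.
by rewrite (anc_trans par_forest rx xy) orbT.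
Qed.

Lemma lower_between x y : anc x y -> upper x -> upper y ->
  block_root x != block_root y -> exists z, [/\ anc x z, anc z y & ~~ upper z].
Proof.
move=> xy x_up y_up roots_ne.
have /existsP[z /and3P[xz zy z_low]] : [exists z, [&& anc x z, anc z y & ~~ upper z]].
  apply: contraR roots_ne => /existsPn no_low; apply/same_rootP => // z xz zy.
  by move: (no_low z); rewrite xz zy /= negbK.
by exists z.
Qed.

Definition same_block x y := [&& upper x, upper y & block_root x == block_root y].

Lemma same_block_upper x y : same_block x y -> upper x /\ upper y.
Proof. by case/and3P. Qed.

Lemma same_block_convex x y z : anc x y -> anc y z -> same_block x z ->
  same_block x y /\ same_block y z.
Proof.
move=> xy yz /and3P[x_up z_up /(same_rootP (anc_trans par_forest xy yz) x_up z_up) xz_up].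
have y_up := xz_up _ xy yz.
rewrite /same_block x_up y_up z_up; split; apply/same_rootP => // w ? ?.
  by apply: xz_up (anc_trans par_forest _ yz).
by apply: xz_up (anc_trans par_forest xy _) _.
Qed.

End Blocks.

Section BlockReversal.
Variables (n : nat) (par : parent_fun n).
Hypothesis par_forest : is_forest par.
Local Notation anc := (strict_anc par).
Local Notation upper := (upper par).
Local Notation min_anc := (min_anc par).
Local Notation block_root := (block_root par).

Definition block v := [set w | upper w && (block_root w == block_root v)].
Definition block_rev v := if upper v then mirror (block v) v else v.
Local Notation pi := block_rev.

Lemma mem_block v : upper v -> v \in block v.
Proof. by move=> v_up; rewrite inE v_up eqxx. Qed.

Lemma eq_block v w : block_root v = block_root w -> block v = block w.
Proof. by move=> e; apply/setP => x; rewrite !inE e. Qed.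

Lemma block_rev_lower v : ~~ upper v -> pi v = v.
Proof. by rewrite /block_rev => /negPf->. Qed.

Lemma block_rev_block v : upper v -> pi v \in block v.
Proof. by move=> v_up; rewrite /block_rev v_up mirror_in ?mem_block. Qed.

Lemma block_revP v : upper v -> upper (pi v) /\ block_root (pi v) = block_root v.
Proof. by move/block_rev_block; rewrite inE => /andP[-> /eqP]. Qed.

Lemma block_revK : involutive pi.
Proof.
move=> v; case: (boolP (upper v)) => v_up; last by rewrite !block_rev_lower.
have [pv_up pv_root] := block_revP v_up.
by rewrite {1}/block_rev pv_up (eq_block pv_root) /block_rev v_up mirrorK ?mem_block.
Qed.

Lemma block_min_anc y r : upper y -> r \in block y -> anc (min_anc y) r /\ min_anc y < r.
Proof.
move=> y_up; rewrite inE => /andP[r_up /eqP e].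
have [mr lt_mr _ _] := min_ancP par_forest r_up.
by rewrite -(min_anc_eq_root par_forest r_up y_up e).
Qed.

Lemma min_anc_lt_block_rev v : upper v -> min_anc v < pi v.
Proof. by move=> v_up; case: (block_min_anc v_up (block_rev_block v_up)). Qed.

Lemma lower_lt_block_rev u v : ~~ upper v -> anc u v -> v < pi u.
Proof.
move=> v_low uv; case: (boolP (upper u)) => u_up; last first.
  by rewrite block_rev_lower // (lower_lt_anc par_forest v_low uv).
have [mu _ _ _] := min_ancP par_forest u_up.
have := lower_lt_anc par_forest v_low (anc_trans par_forest mu uv).
have := min_anc_lt_block_rev u_up; order_lia.
Qed.

Lemma min_anc_le_block_rev u v : upper v -> anc u v -> min_anc v <= pi u.
Proof.
move=> v_up uv; have [_ _ mv_min _] := min_ancP par_forest v_up.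
case: (boolP (upper u)) => u_up; last by rewrite block_rev_lower // mv_min.
have [mu _ _ _] := min_ancP par_forest u_up.
have := mv_min _ (anc_trans par_forest mu uv).
have := min_anc_lt_block_rev u_up; order_lia.
Qed.

End BlockReversal.

Definition rev_blocks n (par : parent_fun n) := relabel (block_rev par) par.

Section RevBlocks.
Variables (n : nat) (par : parent_fun n).
Hypothesis par_forest : is_forest par.
Local Notation anc := (strict_anc par).
Local Notation pi := (block_rev par).
Local Notation par' := (rev_blocks par).

Lemma rev_blocks_forest : is_forest par'.
Proof. exact: (relabel_forest (block_revK par) par_forest). Qed.

Lemma rev_blocks_anc u v : strict_anc par' u v = anc (pi u) (pi v).
Proof. exact: (relabel_anc (block_revK par)). Qed.

Lemma rev_blocks_anc_rev u v : strict_anc par' (pi u) (pi v) = anc u v.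
Proof. by rewrite rev_blocks_anc !block_revK. Qed.

Lemma upper_rev_blocks v : upper par' (pi v) = upper par v.
Proof.
case: (boolP (upper par v)) => v_up.
  have [mv _ _ m_low] := min_ancP par_forest v_up.
  apply/existsP; exists (min_anc par v).
  rewrite -{1}(block_rev_lower m_low) rev_blocks_anc_rev mv /=.
  exact: min_anc_lt_block_rev.
apply/negbTE/existsP => -[u /andP[]].
rewrite rev_blocks_anc block_revK (block_rev_lower v_up).
by move=> /(lower_lt_block_rev par_forest v_up); rewrite block_revK; order_lia.
Qed.

Lemma min_anc_rev_blocks v : upper par v -> min_anc par' (pi v) = min_anc par v.
Proof.
move=> v_up; have [mv _ _ m_low] := min_ancP par_forest v_up.
apply: min_anc_eq; rewrite /is_min_anc -{1}(block_rev_lower m_low).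
rewrite rev_blocks_anc_rev mv; apply/forallP => u; rewrite -[u](block_revK par).
by apply/implyP; rewrite rev_blocks_anc_rev; apply: min_anc_le_block_rev.
Qed.

Lemma block_root_rev_blocks v : upper par v -> block_root par' (pi v) = pi (block_root par v).
Proof.
move=> v_up; apply: (block_root_eq rev_blocks_forest).
have [rv rp] := block_rootP par_forest v_up; have [_ _ _ m_low] := min_ancP par_forest v_up.
rewrite /is_block_root min_anc_rev_blocks // ffunE block_revK // rp /=.
rewrite (block_rev_lower m_low) eqxx andbT rev_blocks_anc_rev.
by rewrite (inj_eq (can_inj (block_revK par))); case: rv => [-> | ->]; rewrite ?eqxx ?orbT.
Qed.

Lemma block_rev_rev_blocks v : block_rev par' (pi v) = v.
Proof.
case: (boolP (upper par v)) => v_up; last first.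
  by rewrite {1}/block_rev upper_rev_blocks (negPf v_up) (block_rev_lower v_up).
have block_pi x : (pi x \in block par v) = (x \in block par v).
  suff block_pi_in y : y \in block par v -> pi y \in block par v.
    by apply/idP/idP => [/block_pi_in|/block_pi_in //]; rewrite block_revK.
  rewrite !inE => /andP[y_up /eqP e]; have [py_up py_root] := block_revP y_up.
  by rewrite py_up py_root e eqxx.
have block_eq : block par' (pi v) = block par v.
  apply/setP => w; rewrite -[w](block_revK par) block_pi !inE upper_rev_blocks.
  case: (boolP (upper par (pi w))) => //= w_up.
  by rewrite !block_root_rev_blocks // (inj_eq (can_inj (block_revK par))).
rewrite {1}/block_rev upper_rev_blocks v_up block_eq.
by rewrite /block_rev v_up mirrorK ?mem_block.
Qed.

Lemma rev_blocksK : rev_blocks par' = par.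
Proof.
apply: etrans (relabelK (block_revK par) par); apply: eq_relabel => w.
by rewrite -{1}[w](block_revK par) block_rev_rev_blocks.
Qed.

End RevBlocks.

Section CrossBlockOrder.
Variables (n : nat) (par : parent_fun n).
Hypothesis par_forest : is_forest par.
Hypothesis par_avoids : avoids par S123 \/ avoids par S132.
Local Notation anc := (strict_anc par).
Local Notation upper := (upper par).
Local Notation min_anc := (min_anc par).
Local Notation block_root := (block_root par).
Local Notation block := (block par).
Local Notation pi := (block_rev par).

Lemma lower_cmp_block_root x y r : upper y -> ~~ upper x -> anc x (min_anc y) ->
  r \in block y -> (x < r) = (x < block_root y).
Proof.
move=> y_up x_low xm r_y.
have [mr lt_mr] := block_min_anc par_forest y_up r_y.
have [mt lt_mt] := min_anc_block_root par_forest y_up.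
have [_ _ _ m_low] := min_ancP par_forest y_up.
have lt_mx := lower_lt_anc par_forest m_low xm.
move: (r_y); rewrite inE => /andP[r_up /eqP r_root].
have [[r_eq | tr] _] := block_rootP par_forest r_up; first by rewrite -r_eq r_root.
rewrite r_root in tr.
have xt := anc_trans par_forest xm mt; have xr := anc_trans par_forest xt tr.
move: (anc_nat_neq par_forest xt) (anc_nat_neq par_forest xr) => ne_xt ne_xr.
case: ltnP => lt_xr; case: ltnP => lt_xt //; exfalso.
- case: par_avoids => [/avoids_S123P[/negP no123 _ _] | /avoids_S132P[_ _ /negP no3124]].
    by apply: no123; apply: (contains123 par_forest mt tr); order_lia.
  by apply: no3124; apply: (contains3124 par_forest xm mt tr); order_lia.
- case: par_avoids => [/avoids_S123P[_ _ /negP no3142] | /avoids_S132P[/negP no132 _ _]].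
    by apply: no3142; apply: (contains3142 par_forest xm mt tr); order_lia.
  by apply: no132; apply: (contains132 par_forest mt tr); order_lia.
Qed.

Lemma lower_cmp_block x y r : ~~ upper x -> anc x y -> upper y -> r \in block y ->
  (x < r) = (x < y).
Proof.
move=> x_low xy y_up r_y; have [my lt_my my_min _] := min_ancP par_forest y_up.
case: (anc_total par_forest xy my) => [x_m | xm | mx].
- have [_ lt_mr] := block_min_anc par_forest y_up r_y.
  by rewrite -x_m in lt_mr lt_my; rewrite lt_mr lt_my.
- rewrite (lower_cmp_block_root y_up x_low xm r_y).
  by rewrite (lower_cmp_block_root y_up x_low xm (mem_block y_up)).
- by have := lower_lt_anc par_forest x_low mx; rewrite ltnNge my_min.
Qed.

Lemma block_gt_lower_desc x y r : upper x -> anc x y -> ~~ upper y -> r \in block x -> y < r.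
Proof.
move=> x_up xy y_low r_x; have [mr lt_mr] := block_min_anc par_forest x_up r_x.
have [mx _ _ _] := min_ancP par_forest x_up.
exact: ltn_trans (lower_lt_anc par_forest y_low (anc_trans par_forest mx xy)) lt_mr.
Qed.

Lemma block_gt_separated x y z r1 r2 : upper x -> upper y -> anc x z -> anc z y ->
  ~~ upper z -> r1 \in block x -> r2 \in block y -> r2 < r1.
Proof.
move=> x_up y_up xz zy z_low r1_x r2_y.
have [mx lt_mx _ mx_low] := min_ancP par_forest x_up.
have [_ _ _ my_low] := min_ancP par_forest y_up.
have x_my : anc x (min_anc y).
  case: (lower_anc_min_anc par_forest y_up z_low zy) => [-> // | zm].
  exact: (anc_trans par_forest xz zm).
have mx_my := anc_trans par_forest mx x_my.
have [_ lt_mx_r1] := block_min_anc par_forest x_up r1_x.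
have [my_t lt_my_t] := min_anc_block_root par_forest y_up.
have lt_my_mx := lower_lt_anc par_forest my_low mx_my.
have x_t := anc_trans par_forest x_my my_t; have ne_xt := anc_nat_neq par_forest x_t.
have ne_r2_mx : (r2 : nat) != min_anc x.
  by apply: contraTneq r2_y => /val_inj ->; rewrite inE (negPf mx_low).
have := lower_cmp_block_root y_up mx_low mx_my r2_y.
case: (ltnP (min_anc x) (block_root y)) => lt_mx_t; last by order_lia.
exfalso; case: (ltnP x (block_root y)) => lt_x_t.
- case: par_avoids => [/avoids_S123P[/negP no123 _ _] | /avoids_S132P[_ /negP no2314 _]].
    by apply: no123; apply: (contains123 par_forest mx x_t); order_lia.
  by apply: no2314; apply: (contains2314 par_forest mx x_my my_t); order_lia.
- case: par_avoids => [/avoids_S123P[_ /negP no2413 _] | /avoids_S132P[/negP no132 _ _]].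
    by apply: no2413; apply: (contains2413 par_forest mx x_my my_t); order_lia.
  by apply: no132; apply: (contains132 par_forest mx x_t); order_lia.
Qed.

Lemma block_rev_ltE x y : anc x y -> (pi x < pi y) = (x < y) (+) same_block par x y.
Proof.
move=> xy; have ne_xy := anc_nat_neq par_forest xy.
case: (boolP (upper x)) => x_up; last first.
  rewrite (block_rev_lower x_up) /same_block (negPf x_up) addbF.
  case: (boolP (upper y)) => y_up; last by rewrite block_rev_lower.
  exact: lower_cmp_block x_up xy y_up (block_rev_block y_up).
case: (boolP (upper y)) => y_up; last first.
  rewrite (block_rev_lower y_up) /same_block (negPf y_up) andbF addbF.
  have := block_gt_lower_desc x_up xy y_up (block_rev_block x_up).
  have := block_gt_lower_desc x_up xy y_up (mem_block x_up); order_lia.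
rewrite /same_block x_up y_up /=.
case: (boolP (block_root x == block_root y)) => [/eqP e | roots_ne].
  have x_y : x \in block y by rewrite inE x_up e eqxx.
  by rewrite /block_rev x_up y_up (eq_block e) mirror_ltE ?mem_block //; order_lia.
have [z [xz zy z_low]] := lower_between par_forest xy x_up y_up roots_ne.
have := block_gt_separated x_up y_up xz zy z_low (block_rev_block x_up) (block_rev_block y_up).
have := block_gt_separated x_up y_up xz zy z_low (mem_block x_up) (mem_block y_up).
rewrite addbF; order_lia.
Qed.

End CrossBlockOrder.

Section AvoidS123.
Variables (n : nat) (par : parent_fun n).
Hypothesis par_forest : is_forest par.
Hypothesis par_avoids : avoids par S123.
Local Notation anc := (strict_anc par).
Local Notation upper := (upper par).
Local Notation same_block := (same_block par).
Local Notation pi := (block_rev par).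

Lemma upper_anc_gt x y : upper x -> anc x y -> y < x.
Proof.
move=> x_up xy; have [mx lt_mx _ _] := min_ancP par_forest x_up.
rewrite ltn_neqAle eq_sym (anc_nat_neq par_forest xy) leqNgt; apply/negP => lt_xy.
have [/negP[]] := avoids_S123P par_avoids.
exact: (contains123 par_forest mx xy lt_mx lt_xy).
Qed.

Lemma block_rev_lt_S123 x y : anc x y ->
  (pi x < pi y) = if upper x then same_block x y else x < y.
Proof.
move=> xy; rewrite (block_rev_ltE par_forest (or_introl par_avoids) xy).
case: ifP => x_up; last by rewrite /same_block x_up addbF.
by rewrite ltnNge ltnW ?upper_anc_gt.
Qed.

Lemma rev_blocks_avoids132 : ~~ contains (rev_blocks par) [:: 1; 3; 2].
Proof.
apply/negP => /(relabel_contains3 (block_revK par)) [a [b [c [ab bc lt_ab lt_ac lt_bc]]]].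
have ac := anc_trans par_forest ab bc.
rewrite (block_rev_lt_S123 ab) in lt_ab; rewrite (block_rev_lt_S123 ac) in lt_ac.
rewrite (block_rev_lt_S123 bc) in lt_bc.
case: (boolP (upper a)) => [a_up | a_low].
  rewrite a_up in lt_ac.
  have [/and3P[_ b_up _] s_bc] := same_block_convex par_forest ab bc lt_ac.
  by rewrite b_up s_bc in lt_bc.
rewrite (negPf a_low) in lt_ab lt_ac.
have b_up := lt_anc_upper ab lt_ab; have c_up := lt_anc_upper ac lt_ac.
rewrite b_up /same_block b_up c_up /= in lt_bc.
have [z [bz zc z_low]] := lower_between par_forest bc b_up c_up (negbT lt_bc).
have az := anc_trans par_forest ab bz.
have lt_za := lower_lt_anc par_forest z_low az; have lt_cb := upper_anc_gt b_up bc.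
have [_ /negP[]] := avoids_S123P par_avoids.
by apply: (contains2413 par_forest ab bz zc); order_lia.
Qed.

Lemma rev_blocks_avoids2314 : ~~ contains (rev_blocks par) [:: 2; 3; 1; 4].
Proof.
apply/negP => /(relabel_contains4 (block_revK par)).
move=> [a [b [c [d [ab bc cd [lt_ab lt_ac lt_ad] [lt_bc lt_bd _]]]]]].
have ac := anc_trans par_forest ab bc; have ad := anc_trans par_forest ac cd.
have bd := anc_trans par_forest bc cd.
rewrite (block_rev_lt_S123 ab) in lt_ab; rewrite (block_rev_lt_S123 ac) in lt_ac.
rewrite (block_rev_lt_S123 ad) in lt_ad; rewrite (block_rev_lt_S123 bc) in lt_bc.
rewrite (block_rev_lt_S123 bd) in lt_bd.
case: (boolP (upper a)) => [a_up | a_low].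
  rewrite a_up in lt_ac lt_ad; have [s_ac _] := same_block_convex par_forest ac cd lt_ad.
  by rewrite s_ac in lt_ac.
rewrite (negPf a_low) in lt_ab; have b_up := lt_anc_upper ab lt_ab.
rewrite b_up in lt_bc lt_bd; have [s_bc _] := same_block_convex par_forest bc cd lt_bd.
by rewrite s_bc in lt_bc.
Qed.

Lemma rev_blocks_avoids3124 : ~~ contains (rev_blocks par) [:: 3; 1; 2; 4].
Proof.
apply/negP => /(relabel_contains4 (block_revK par)).
move=> [a [b [c [d [ab bc cd [lt_ab lt_ac lt_ad] [lt_bc _ lt_cd]]]]]].
have ac := anc_trans par_forest ab bc; have ad := anc_trans par_forest ac cd.
have bd := anc_trans par_forest bc cd.
rewrite (block_rev_lt_S123 ab) in lt_ab; rewrite (block_rev_lt_S123 ac) in lt_ac.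
rewrite (block_rev_lt_S123 ad) in lt_ad; rewrite (block_rev_lt_S123 bc) in lt_bc.
rewrite (block_rev_lt_S123 cd) in lt_cd.
case: (boolP (upper a)) => [a_up | a_low].
  rewrite a_up in lt_ab lt_ad; have [s_ab _] := same_block_convex par_forest ab bd lt_ad.
  by rewrite s_ab in lt_ab.
rewrite (negPf a_low) in lt_ac lt_ad.
case: (boolP (upper c)) => [c_up | c_low].
  by have := upper_anc_gt c_up cd; order_lia.
case: (boolP (upper b)) => [b_up | b_low]; rewrite ?b_up ?(negPf b_low) in lt_bc.
  by have [_ c_up] := same_block_upper lt_bc; rewrite c_up in c_low.
by have := lower_lt_anc par_forest c_low bc; order_lia.
Qed.

End AvoidS123.

Section AvoidS132.
Variables (n : nat) (par : parent_fun n).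
Hypothesis par_forest : is_forest par.
Hypothesis par_avoids : avoids par S132.
Local Notation anc := (strict_anc par).
Local Notation upper := (upper par).
Local Notation same_block := (same_block par).
Local Notation pi := (block_rev par).

Lemma upper_anc_ltE x y : upper x -> anc x y -> (x < y) = same_block x y.
Proof.
move=> x_up xy; have [mx lt_mx _ mx_low] := min_ancP par_forest x_up.
have [/negP no132 /negP no2314 _] := avoids_S132P par_avoids.
case s_xy: (same_block x y).
  have /and3P[_ y_up /eqP roots_eq] := s_xy.
  have y_x : y \in block par x by rewrite inE y_up roots_eq eqxx.
  have [_ lt_my] := block_min_anc par_forest x_up y_x.
  rewrite ltn_neqAle (anc_nat_neq par_forest xy) leqNgt; apply/negP => lt_yx.
  exact: no132 (contains132 par_forest mx xy lt_my lt_yx).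
apply/negbTE/negP => lt_xy; have y_up := lt_anc_upper xy lt_xy.
have roots_ne : block_root par x != block_root par y.
  by move: s_xy; rewrite /same_block x_up y_up => /negbT.
have [z [xz zy z_low]] := lower_between par_forest xy x_up y_up roots_ne.
have lt_zm := lower_lt_anc par_forest z_low (anc_trans par_forest mx xz).
by apply: no2314; apply: (contains2314 par_forest mx xz zy).
Qed.

Lemma block_rev_lt_S132 x y : anc x y -> (pi x < pi y) = ~~ upper x && (x < y).
Proof.
move=> xy; rewrite (block_rev_ltE par_forest (or_intror par_avoids) xy).
case: (boolP (upper x)) => [x_up | x_low]; first by rewrite upper_anc_ltE ?addbb.
by rewrite /same_block (negPf x_low) addbF.
Qed.

Lemma rev_blocks_avoids123 : ~~ contains (rev_blocks par) [:: 1; 2; 3].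
Proof.
apply/negP => /(relabel_contains3 (block_revK par)) [a [b [c [ab bc lt_ab _ lt_bc]]]].
rewrite (block_rev_lt_S132 ab) in lt_ab; rewrite (block_rev_lt_S132 bc) in lt_bc.
case/andP: lt_ab => _ lt_ab.
by rewrite (lt_anc_upper ab lt_ab) in lt_bc.
Qed.

Lemma rev_blocks_avoids2413 : ~~ contains (rev_blocks par) [:: 2; 4; 1; 3].
Proof.
apply/negP => /(relabel_contains4 (block_revK par)).
move=> [a [b [c [d [ab bc cd [lt_ab _ lt_ad] [_ _ lt_cd]]]]]].
have bd := anc_trans par_forest bc cd.
rewrite (block_rev_lt_S132 ab) in lt_ab; rewrite (block_rev_lt_S132 cd) in lt_cd.
rewrite (block_rev_lt_S132 (anc_trans par_forest ab bd)) in lt_ad.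
case/andP: lt_ab => _ lt_ab; case/andP: lt_ad => _ lt_ad; case/andP: lt_cd => c_low _.
have b_up := lt_anc_upper ab lt_ab.
have lt_db : d < b.
  rewrite ltn_neqAle eq_sym (anc_nat_neq par_forest bd) leqNgt upper_anc_ltE //.
  apply/negP => /(same_block_convex par_forest bc cd) [_ /same_block_upper[c_up _]].
  by rewrite c_up in c_low.
by have [/negP[]] := avoids_S132P par_avoids; apply: (contains132 par_forest ab bd).
Qed.

Lemma rev_blocks_avoids3142 : ~~ contains (rev_blocks par) [:: 3; 1; 4; 2].
Proof.
apply/negP => /(relabel_contains4 (block_revK par)).
move=> [a [b [c [d [ab bc cd [_ lt_ac lt_ad] [_ lt_bd _]]]]]].
have ac := anc_trans par_forest ab bc.
rewrite (block_rev_lt_S132 ac) in lt_ac.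
rewrite (block_rev_lt_S132 (anc_trans par_forest ac cd)) in lt_ad.
rewrite (block_rev_lt_S132 (anc_trans par_forest bc cd)) in lt_bd.
case/andP: lt_ac => a_low lt_ac; case/andP: lt_bd => _ lt_bd.
rewrite a_low /= in lt_ad.
have [/negP[]] := avoids_S132P par_avoids; apply: (contains132 par_forest bc cd lt_bd).
order_lia.
Qed.

End AvoidS132.

Lemma rev_blocks_avoids_S132 n (par : parent_fun n) :
  is_forest par -> avoids par S123 -> avoids (rev_blocks par) S132.
Proof.
move=> par_forest par_avoids; apply/and4P; split=> //.
- exact: (rev_blocks_avoids132 par_forest par_avoids).
- exact: (rev_blocks_avoids2314 par_forest par_avoids).
- exact: (rev_blocks_avoids3124 par_forest par_avoids).
Qed.

Lemma rev_blocks_avoids_S123 n (par : parent_fun n) :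
  is_forest par -> avoids par S132 -> avoids (rev_blocks par) S123.
Proof.
move=> par_forest par_avoids; apply/and4P; split=> //.
- exact: (rev_blocks_avoids123 par_forest par_avoids).
- exact: (rev_blocks_avoids2413 par_forest par_avoids).
- exact: (rev_blocks_avoids3142 par_forest par_avoids).
Qed.

Lemma card_le_in_cancel (T : finType) (f : T -> T) (A B : {set T}) :
  {in A, forall x, f x \in B} -> {in A, cancel f f} -> #|A| <= #|B|.
Proof.
move=> fAB fK; rewrite -(card_in_imset (can_in_inj fK)); apply/subset_leq_card/subsetP.
by move=> _ /imsetP[x xA ->]; apply: fAB.
Qed.

Theorem corollary3p19 :
  forest_wilf_equiv [:: [:: 1; 2; 3]; [:: 2; 4; 1; 3]; [:: 3; 1; 4; 2]]
                    [:: [:: 1; 3; 2]; [:: 2; 3; 1; 4]; [:: 3; 1; 2; 4]].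
Proof.
move=> m; apply/eqP; rewrite eqn_leq -/S123 -/S132.
apply/andP; split; apply: (card_le_in_cancel (f := @rev_blocks m)) => par;
  rewrite inE => /andP[par_forest par_avoids]; rewrite ?rev_blocksK //.
- by rewrite inE rev_blocks_forest ?rev_blocks_avoids_S132.
- by rewrite inE rev_blocks_forest ?rev_blocks_avoids_S123.
Qed.
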